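(* Consider running GD-$k$ with rate $r=\frac{1}{\gamma k^2}$ on an instance $\sigma$ of $k$-MPMD on an $H$-metric space with parameter $\gamma$, and let $\mathcal M=\{M_1,\ldots,M_p\}$ be the output perfect $k$-way matching, where $M_\ell=\{v_{\ell,1},\ldots,v_{\ell,k}\}$ is matched at time $\tau_\ell$. Let $T$ be the time at which all requests are matched. Then the total waiting cost satisfies $$\sum_{\ell=1}^p\sum_{i=1}^k(\tau_\ell-\mathrm{atime}(v_{\ell,i}))=\frac1r\sum_{S\subseteq V}\mathrm{sur}(S)\,y_S(T)\le\frac1r\,\mathcal D'(\sigma),$$ where $\mathcal D'(\sigma)$ is the optimal value of $(\mathcal D')$.
   Context: $k\ge2$. An $H$-metric with parameter $\gamma$ (integer, $1\le\gamma\le k-1$) is a map $d_H:\chi^k\to[0,\infty)$ that is invariant under permutation of its arguments, is zero iff all arguments are equal, satisfies $d_H(p_1,\ldots,p_k)\le d_H(p_1,\ldots,p_i,a,\ldots,a)+d_H(a,\ldots,a,p_{i+1},\ldots,p_k)$ for all $p_j,a\in\chi$ and $i\in\{1,\dots,k\}$ (with $k-i$, resp. $i$, copies of $a$), and satisfies: $d_H(p)\le d_H(p')$ whenever the set of distinct entries of $p$ is a proper subset of that of $p'$, and $d_H(p)\le\gamma d_H(p')$ whenever these sets are equal. An instance is $\sigma=(V,\mathrm{atime},\mathrm{pos})$ with $V=\{u_1,\ldots,u_m\}$ ($m$ a multiple of $k$), nondecreasing arrival times $\mathrm{atime}:V\to\mathbb R_{\ge0}$ and positions $\mathrm{pos}:V\to\chi$.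 The metric $d$ on $\chi$ is $d(p,q):=d_H(p,q,\ldots,q)+d_H(q,p,\ldots,p)$ (first argument once, second $k-1$ times); $E$ is the set of unordered pairs of distinct requests, $\mathrm{opt\text{-}cost}(\{u,w\}):=d(\mathrm{pos}(u),\mathrm{pos}(w))+|\mathrm{atime}(u)-\mathrm{atime}(w)|$; for $S\subseteq V$, $\mathrm{sur}(S):=|S|\bmod k$ and $\delta(S)$ is the set of pairs with exactly one element in $S$. The LP $(\mathcal D')$ is: maximize $\sum_{S\subseteq V}\mathrm{sur}(S)(k-\mathrm{sur}(S))y_S$ subject to $\sum_{S:e\in\delta(S)}y_S\le\frac{1}{\gamma k^2}\mathrm{opt\text{-}cost}(e)$ for all $e\in E$ and $y_S\ge0$ for all $S\subseteq V$. Algorithm GD-$k$ (Greedy Dual for $k$-MPMD) runs in continuous time from $0$. It maintains: a partition of the already-arrived requests into ''active sets'' ($A(v)$ denotes the active set containing $v$); a family $\mathcal M$ of disjoint $k$-element sets of requests (the groups matched so far); a request is free if it lies in no set of $\mathcal M$, and $\mathrm{free}(S)$ is the set of free requests of $S$; and dual values $y_S(\tau)\ge0$ for $S\subseteq V$, all initially $0$. When a request $v$ arrives, $A(v):=\{v\}$ is created. At every moment, for each active set $S$ with $\mathrm{free}(S)\ne\emptyset$, $y_S$ increases continuously at rate $r$; all other $y_S$ stay constant. Whenever a pair $e=\{u,w\}$ of arrived requests with $A(u)\ne A(w)$ becomes tight, i.e. $\sum_{S:e\in\delta(S)}y_S=\frac{1}{\gamma k^2}\mathrm{opt\text{-}cost}(e)$,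 the algorithm replaces $A(u)$ and $A(w)$ by the single active set $S=A(u)\cup A(w)$, marks $e$, and, while $|\mathrm{free}(S)|\ge k$, chooses arbitrarily $k$ free requests of $S$ and adds them as a group to $\mathcal M$ (they are matched at the current time). *)

From HB Require Import structures.
From mathcomp Require Import all_boot all_order all_algebra all_fingroup.
From mathcomp Require Import boolp classical_sets reals constructive_ereal ereal.
Set Implicit Arguments. Unset Strict Implicit. Unset Printing Implicit Defensive.
Import Order.TTheory GRing.Theory Num.Theory.
Local Open Scope ring_scope.
Local Open Scope classical_set_scope.

Section HMetric.
Variables (R : realType) (X : Type) (k gamma : nat).

Definition entries (p : 'I_k -> X) (x : X) : Prop := exists j, p j = x.

Definition is_Hmetric (dH : ('I_k -> X) -> R) : Prop :=
  (forall (s : {perm 'I_k}) (p : 'I_k -> X), dH (fun j => p (s j)) = dH p) /\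
  (forall p, 0 <= dH p) /\
  (forall p, dH p = 0 <-> (forall i j, p i = p j)) /\
  (forall (p : 'I_k -> X) (a : X) (i : nat), (1 <= i <= k)%N ->
     dH p <= dH (fun j : 'I_k => if (j < i)%N then p j else a)
             + dH (fun j : 'I_k => if (j < i)%N then a else p j)) /\
  (forall p p', (forall x, entries p x -> entries p' x) ->
                (exists x, entries p' x /\ ~ entries p x) -> dH p <= dH p') /\
  (forall p p', (forall x, entries p x <-> entries p' x) ->
                dH p <= gamma%:R * dH p').

Definition hdist (dH : ('I_k -> X) -> R) (p q : X) : R :=
  dH (fun j : 'I_k => if val j == 0%N then p else q)
  + dH (fun j : 'I_k => if val j == 0%N then q else p).
End HMetric.

Section Instance.
Variables (R : realType) (X : Type) (k m gamma : nat).
Variables (dH : ('I_k -> X) -> R) (atime : 'I_m -> R) (pos : 'I_m -> X).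

Definition opt_cost (u w : 'I_m) : R :=
  hdist dH (pos u) (pos w) + `|atime u - atime w|.

Definition sur (S : {set 'I_m}) : nat := (#|S| %% k)%N.

Definition cuts (S : {set 'I_m}) (u w : 'I_m) : bool := (u \in S) != (w \in S).

Definition cutsum (y : {set 'I_m} -> R) (u w : 'I_m) : R :=
  \sum_(S : {set 'I_m} | cuts S u w) y S.

Definition lp_bound (u w : 'I_m) : R :=
  (gamma%:R * k%:R ^+ 2)^-1 * opt_cost u w.

Definition Dfeasible (y : {set 'I_m} -> R) : Prop :=
  (forall u w : 'I_m, u != w -> cutsum y u w <= lp_bound u w) /\
  (forall S, 0 <= y S).

Definition Dobj (y : {set 'I_m} -> R) : R :=
  \sum_(S : {set 'I_m}) ((sur S * (k - sur S))%N%:R * y S).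

Definition Dprime : \bar R :=
  ereal_sup [set (Dobj y)%:E | y in [set y | Dfeasible y]].
End Instance.

Local Close Scope classical_set_scope.
Record gstate (R : realType) (m : nat) := GState {
  gtime : R;
  gact  : {set {set 'I_m}};
  gM    : seq ({set 'I_m} * R);          (* matched groups with match times *)
  gy    : {set 'I_m} -> R
}.

Section GD.
Variables (R : realType) (X : Type) (k m gamma : nat) (r : R).
Variables (dH : ('I_k -> X) -> R) (atime : 'I_m -> R) (pos : 'I_m -> X).

Definition matched (st : gstate R m) (v : 'I_m) : bool :=
  has (fun g : {set 'I_m} * R => v \in (g.1 : {set 'I_m})) (gM st).
Definition arrived (st : gstate R m) (v : 'I_m) : bool := v \in finset.cover (gact st).
Definition free (st : gstate R m) (S : {set 'I_m}) : {set 'I_m} :=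
  [set v in S | ~~ matched st v].
Definition blk (st : gstate R m) (v : 'I_m) : {set 'I_m} := finset.pblock (gact st) v.

Definition bnd := @lp_bound R X k m gamma dH atime pos.

Definition grow (st : gstate R m) (t' : R) : {set 'I_m} -> R :=
  fun S => gy st S +
    (if (S \in gact st) && (free st S != finset.set0) then r * (t' - gtime st) else 0).

Definition cross_pair (st : gstate R m) (u w : 'I_m) : bool :=
  [&& arrived st u, arrived st w & blk st u != blk st w].

Inductive gd_step : gstate R m -> gstate R m -> Prop :=
| gd_arrive st v :
    ~~ arrived st v -> atime v = gtime st ->
    gd_step st (GState (gtime st) (gact st :|: [set [set v]]) (gM st) (gy st))
| gd_merge st u w (gs : seq {set 'I_m}) :
    cross_pair st u w ->
    cutsum (gy st) u w = bnd u w ->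
    (* the "while |free(S)| >= k" loop: disjoint k-subsets of free(S)
       are matched, leaving fewer than k free requests in S *)
    all (fun g : {set 'I_m} => (g \subset free st (blk st u :|: blk st w)) && (#|g| == k)) gs ->
    pairwise (fun g h : {set 'I_m} => [disjoint g & h]) gs ->
    (#|free st (blk st u :|: blk st w) :\: \bigcup_(g <- gs) g| < k)%N ->
    gd_step st (GState (gtime st)
                  ((gact st :\ blk st u :\ blk st w) :|: [set blk st u :|: blk st w])
                  (gM st ++ [seq (g, gtime st) | g <- gs])
                  (gy st))
| gd_wait st (t' : R) :
    gtime st < t' ->
    (forall v, atime v <= gtime st -> arrived st v) ->
    (forall v, ~~ arrived st v -> t' <= atime v) ->
    (* every pair that became tight has been processed *)
    (forall u w, cross_pair st u w -> cutsum (gy st) u w < bnd u w) ->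
    (forall u w, cross_pair st u w -> cutsum (grow st t') u w <= bnd u w) ->
    gd_step st (GState t' (gact st) (gM st) (grow st t')).

Definition gd_init : gstate R m := GState 0 finset.set0 [::] (fun _ => 0).

Inductive gd_reach : gstate R m -> Prop :=
| gd_reach0 : gd_reach gd_init
| gd_reachS st st' : gd_reach st -> gd_step st st' -> gd_reach st'.
End GD.

From Pilot Require Import Defs.
From HB Require Import structures.
From mathcomp Require Import all_boot all_order all_algebra all_fingroup.
From mathcomp Require Import boolp classical_sets reals constructive_ereal ereal.
From mathcomp Require Import ring lra.
Set Implicit Arguments.
Unset Strict Implicit.
Unset Printing Implicit Defensive.
Import Order.TTheory GRing.Theory Num.Theory.
Local Open Scope ring_scope.

(* Each active set S
   holds exactly sur(S) free requests: arrivals add singletons, and a merge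
   matches groups of k requests while leaving fewer than k free ones.  Hence
   while time runs, the waiting time of the free requests grows at rate
   sum_S sur(S), and each y_S with sur(S) > 0 grows at rate r, so the waiting
   cost of the partial matching stays equal to (1/r) sum_S sur(S) y_S.  The
   duals also stay feasible for (D'): the sets containing an arrived request v
   carry at most r times its waiting time, which bounds the constraint of any
   pair {u, v} with u not yet arrived, and the other constraints are never
   violated by the algorithm.  Finally sur(S) <= sur(S) (k - sur(S)), so
   (1/r) sum_S sur(S) y_S is at most (1/r) times the value of (D'). *)

Lemma coverP (T : finType) (P : {set {set T}}) x :
  reflect (exists2 B, B \in P & x \in B) (x \in finset.cover P).
Proof. by apply: (iffP finset.bigcupP) => -[B]; exists B. Qed.

Section PairwiseDisjointUnion.
Variable T : finType.

Lemma big_bigcup_seq (Q : Type) (idx : Q) (op : Monoid.com_law idx)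
  (F : T -> Q) (gs : seq {set T}) :
  pairwise (fun g h : {set T} => [disjoint g & h]) gs ->
  \big[op/idx]_(g <- gs) \big[op/idx]_(v in g) F v =
  \big[op/idx]_(v in \bigcup_(g <- gs) g) F v.
Proof.
elim: gs => [|g gs IH]; first by rewrite !big_nil big_set0.
rewrite /= => /andP[g_disj gs_disj]; rewrite !big_cons IH //.
have g_disj_U : [disjoint g & \bigcup_(h <- gs) h].
  rewrite -setI_eq0; apply/eqP/setP => x; rewrite !inE finset.bigcup_seq.
  apply/negbTE/negP => /andP[xg /finset.bigcupP[h hin xh]].
  by move/allP: g_disj => /(_ h hin) /disjointFr /(_ xg); rewrite xh.
by rewrite -bigU //=; apply: eq_bigl => x; rewrite !inE.
Qed.

Lemma card_bigcup_seq (n : nat) (gs : seq {set T}) :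
  pairwise (fun g h : {set T} => [disjoint g & h]) gs ->
  all (fun g : {set T} => #|g| == n) gs ->
  #|\bigcup_(g <- gs) g| = (n * size gs)%N.
Proof.
move=> gs_disj gs_card; rewrite -sum1_card.
rewrite -(@big_bigcup_seq _ _ addn (fun=> 1%N) gs gs_disj).
rewrite (eq_big_seq (fun=> n)); last by move=> g /(allP gs_card) /eqP <-; rewrite sum1_card.
by rewrite big_const_seq count_predT iter_addn_0 mulnC.
Qed.

End PairwiseDisjointUnion.

Section GDk.
Variables (R : realType) (X : Type) (k m gamma : nat) (r : R).
Variables (dH : ('I_k -> X) -> R) (atime : 'I_m -> R) (pos : 'I_m -> X).
Hypotheses (k_gt1 : (1 < k)%N) (gamma_gt0 : (0 < gamma)%N).
Hypothesis r_def : r = (gamma%:R * k%:R ^+ 2)^-1.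
Hypothesis dH_ge0 : forall p, 0 <= dH p.
Hypothesis atime_ge0 : forall v, 0 <= atime v.

Local Notation bound := (@bnd R X k m gamma dH atime pos).
Local Notation reachable := (@gd_reach R X k m gamma r dH atime pos).

Lemma r_gt0 : 0 < r.
Proof. by rewrite r_def invr_gt0 mulr_gt0 ?exprn_gt0 ?ltr0n // ltnW. Qed.

Lemma bound_ge0 u w : 0 <= bound u w.
Proof. by rewrite mulr_ge0 ?invr_ge0 ?mulr_ge0 ?addr_ge0. Qed.

Lemma bound_ge_delay u w : r * (atime u - atime w) <= bound u w.
Proof.
rewrite /bnd /lp_bound -r_def ler_wpM2l ?(ltW r_gt0) //.
by rewrite (le_trans (ler_norm _)) // lerDr addr_ge0.
Qed.

Lemma bound_sym u w : bound u w = bound w u.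
Proof. by rewrite /bnd /lp_bound /opt_cost /hdist distrC (addrC (dH _)). Qed.

Lemma cutsum_sym (y : {set 'I_m} -> R) u w : cutsum y u w = cutsum y w u.
Proof. by apply: eq_bigl => S; rewrite /cuts eq_sym. Qed.

(* When [u] has not arrived, its sets carry no dual value, so the constraint of
   [{u, w}] only sees the sets of [w], which carry at most [r] times the
   waiting time of [w]; and that is at most [r (atime u - atime w)]. *)
Lemma cutsum_le_bound_unarrived (y : {set 'I_m} -> R) (arr : pred 'I_m) t u w :
  (forall S, 0 <= y S) ->
  (forall v, ~~ arr v -> forall S : {set 'I_m}, v \in S -> y S = 0) ->
  (forall v, arr v -> \sum_(S : {set 'I_m} | v \in S) y S <= r * (t - atime v)) ->
  t <= atime u -> ~~ arr u -> cutsum y u w <= bound u w.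
Proof.
move=> y_ge0 y_unarr y_load t_le_u u_unarr.
have -> : cutsum y u w = \sum_(S : {set 'I_m} | w \in S) y S.
  rewrite /cutsum [RHS]big_mkcond [LHS]big_mkcond; apply: eq_bigr => S _.
  rewrite /cuts; case uS: (u \in S); case wS: (w \in S) => //=;
  by rewrite (y_unarr u u_unarr S uS).
have [w_arr | w_unarr] := boolP (arr w); last first.
  by rewrite big1 ?bound_ge0 // => S; apply: y_unarr.
apply: le_trans (y_load w w_arr) (le_trans _ (bound_ge_delay u w)).
by rewrite ler_wpM2l ?(ltW r_gt0) ?lerD2r.
Qed.

Definition waiting_cost (st : gstate R m) : R :=
  \sum_(g <- gM st) \sum_(v in g.1) (g.2 - atime v)
  + \sum_(v | arrived st v && ~~ matched st v) (gtime st - atime v).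

Definition dual_charge (st : gstate R m) : R :=
  r^-1 * \sum_(S : {set 'I_m}) ((sur k S)%:R * gy st S).

Record gd_inv (st : gstate R m) : Prop := GDInv {
  inv_trivIset : finset.trivIset (Defs.gact st);
  inv_matched_arrived : forall v, matched st v -> arrived st v;
  inv_card_free : forall S, S \in Defs.gact st -> #|Defs.free st S| = sur k S;
  inv_y_ge0 : forall S, 0 <= gy st S;
  inv_y_unarrived : forall v, ~~ arrived st v ->
    forall S : {set 'I_m}, v \in S -> gy st S = 0;
  inv_load : forall v, arrived st v ->
    \sum_(S : {set 'I_m} | v \in S) gy st S <= r * (gtime st - atime v);
  inv_time_le : forall v, ~~ arrived st v -> gtime st <= atime v;
  inv_feasible : forall u w, u != w -> cutsum (gy st) u w <= bound u w;
  inv_cost : waiting_cost st = dual_charge st }.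

Lemma gd_inv_init : gd_inv (gd_init R m).
Proof.
have unarr v : arrived (gd_init R m) v = false.
  by apply/negbTE/negP => /coverP[C]; rewrite finset.inE.
split => //=.
- by apply/finset.trivIsetP => C D; rewrite finset.inE.
- by move=> S; rewrite finset.inE.
- by move=> v; rewrite unarr.
- by move=> u w _; rewrite /cutsum big1 ?bound_ge0.
- rewrite /waiting_cost /dual_charge /= big_nil add0r big1; last by move=> v; rewrite unarr.
  by rewrite big1 ?mulr0 // => S _; rewrite mulr0.
Qed.

Lemma free_sub (st : gstate R m) S : Defs.free st S \subset S.
Proof. by apply/fintype.subsetP => x; rewrite /Defs.free finset.inE => /andP[]. Qed.

Lemma sum_free_requests (st : gstate R m) (c : R) :
  finset.trivIset (Defs.gact st) ->
  \sum_(v | arrived st v && ~~ matched st v) c =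
  \sum_(S in Defs.gact st) #|Defs.free st S|%:R * c.
Proof.
move=> triv; rewrite /arrived (@big_trivIset_cond _ _ _ _ _ _ (fun=> c) triv).
apply: eq_bigr => S _.
rewrite (eq_bigl (fun x => x \in Defs.free st S)); last first.
  by move=> x; rewrite /Defs.free finset.inE.
by rewrite sumr_const mulr_natl.
Qed.

Lemma arrived_add_singleton (st : gstate R m) v x :
  arrived (GState (gtime st) (Defs.gact st :|: [set [set v]]) (gM st) (gy st)) x =
  arrived st x || (x == v).
Proof.
apply/coverP/orP => [[C] | [/coverP [C CP xC] | /eqP ->]].
- rewrite !finset.inE => /orP[CP xC | /eqP -> /set1P ->]; last by right.
  by left; apply/coverP; exists C.
- by exists C; rewrite // finset.inE CP.
- by exists [set v]; rewrite !finset.inE eqxx ?orbT.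
Qed.

Lemma gd_inv_arrive (st : gstate R m) v : gd_inv st -> ~~ arrived st v ->
  atime v = gtime st ->
  gd_inv (GState (gtime st) (Defs.gact st :|: [set [set v]]) (gM st) (gy st)).
Proof.
move=> [triv m_arr card_free y_ge0 y_unarr load time_le feas cost] v_unarr v_now.
set st' := GState _ _ _ _.
have arrivedE x : arrived st' x = arrived st x || (x == v).
  exact: arrived_add_singleton.
have v_unm : ~~ matched st v by apply: contra v_unarr; apply: m_arr.
have v_notin C : C \in Defs.gact st -> v \notin C.
  by move=> CP; apply: contra v_unarr => vC; apply/coverP; exists C.
split => //.
- apply/finset.trivIsetP => C D; rewrite !finset.inE.
  move=> /orP[CP|/eqP->] /orP[DP|/eqP->] CD.
  + exact: (finset.trivIsetP triv).
  + by rewrite disjoint_sym disjoints1 v_notin.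
  + by rewrite disjoints1 v_notin.
  + by rewrite eqxx in CD.
- by move=> x /m_arr x_arr; rewrite arrivedE x_arr.
- move=> S; rewrite !finset.inE => /orP[SP|/eqP->]; first exact: card_free.
  have -> : Defs.free st' [set v] = [set v].
    apply/setP => x; rewrite /Defs.free !finset.inE.
    by case: (x =P v) => [->|] //=; rewrite v_unm.
  by rewrite /sur cards1 modn_small.
- by move=> x; rewrite arrivedE negb_or => /andP[x_unarr _]; apply: y_unarr.
- move=> x; rewrite arrivedE => /orP[x_arr|/eqP->]; first exact: load.
  by rewrite big1 ?v_now ?subrr ?mulr0 // => S; apply: y_unarr.
- by move=> x; rewrite arrivedE negb_or => /andP[x_unarr _]; apply: time_le.
- rewrite -[dual_charge st']/(dual_charge st) -cost /waiting_cost; congr (_ + _).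
  change (\sum_(x | arrived st' x && ~~ matched st x) (gtime st - atime x) =
          \sum_(x | arrived st x && ~~ matched st x) (gtime st - atime x)).
  rewrite (bigD1 v) /=; last by rewrite arrivedE eqxx orbT.
  rewrite v_now subrr add0r; apply: eq_bigl => x; rewrite arrivedE.
  case: (x =P v) => [->|_]; first by rewrite andbF (negbTE v_unarr).
  by rewrite orbF andbT.
Qed.

Section WaitStep.
Variables (st : gstate R m) (t' : R).
Hypothesis st_inv : gd_inv st.
Hypothesis time_lt : gtime st < t'.
Hypothesis le_arrival : forall v, ~~ arrived st v -> t' <= atime v.
Hypothesis cross_feasible :
  forall u w, cross_pair st u w -> cutsum (grow r st t') u w <= bound u w.

Local Notation growing S :=
  ((S \in Defs.gact st) && (Defs.free st S != finset.set0)).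

Lemma growE S :
  grow r st t' S = gy st S + (if growing S then r * (t' - gtime st) else 0).
Proof. by []. Qed.

Lemma growth_ge0 : 0 <= r * (t' - gtime st).
Proof. by rewrite mulr_ge0 ?(ltW r_gt0) // subr_ge0 ltW. Qed.

Lemma grow_ge0 S : 0 <= grow r st t' S.
Proof.
rewrite growE addr_ge0 //; first exact: (inv_y_ge0 st_inv).
by case: ifP; rewrite ?growth_ge0.
Qed.

Lemma grow_unarrived v : ~~ arrived st v ->
  forall S : {set 'I_m}, v \in S -> grow r st t' S = 0.
Proof.
move=> v_unarr S vS; rewrite growE (inv_y_unarrived st_inv v_unarr vS) add0r.
case: ifP => // /andP[SP _]; case/negP: v_unarr; apply/coverP; exists S => //.
Qed.

(* Of the active sets, which partition the arrived requests, only [blk st v]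
   contains [v]. *)
Lemma grow_load v : arrived st v ->
  \sum_(S : {set 'I_m} | v \in S) grow r st t' S <= r * (t' - atime v).
Proof.
move=> v_arr; rewrite big_split /=.
have growth_v : \sum_(S : {set 'I_m} | v \in S)
    (if growing S then r * (t' - gtime st) else 0) <= r * (t' - gtime st).
  rewrite (bigD1 (blk st v)) ?mem_pblock //= big1 ?addr0.
    by case: ifP => // _; apply: growth_ge0.
  move=> S /andP[vS S_neq]; case: ifP => // /andP[SP _].
  by rewrite -(def_pblock (inv_trivIset st_inv) SP vS) eqxx in S_neq.
have := inv_load st_inv v_arr; lra.
Qed.

Lemma grow_feasible u w : u != w -> cutsum (grow r st t') u w <= bound u w.
Proof.
move=> uw; have [cross|not_cross] := boolP (cross_pair st u w).
  exact: cross_feasible.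
have cut_unarr w' := cutsum_le_bound_unarrived w' grow_ge0 grow_unarrived grow_load.
have [u_arr|u_unarr] := boolP (arrived st u); last first.
  exact: cut_unarr w (le_arrival u_unarr) u_unarr.
have [w_arr|w_unarr] := boolP (arrived st w); last first.
  by rewrite cutsum_sym bound_sym; exact: cut_unarr u (le_arrival w_unarr) w_unarr.
have same_blk : blk st u = blk st w.
  by apply/eqP; move: not_cross; rewrite /cross_pair u_arr w_arr => /negbNE.
have blkE S v : S \in Defs.gact st -> v \in S -> blk st v = S.
  exact: def_pblock (inv_trivIset st_inv).
have in_blk v : arrived st v -> v \in blk st v by rewrite mem_pblock.
(* [u] and [w] lie in the same active set, and a growing set contains both or
   neither of them. *)
suff -> : cutsum (grow r st t') u w = cutsum (gy st) u w by apply: (inv_feasible st_inv).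
apply: eq_bigr => S; rewrite growE /cuts; case: ifP => [/andP[SP _]|_]; last by rewrite addr0.
case uS: (u \in S); case wS: (w \in S) => //= _.
  by move: (in_blk w w_arr); rewrite -same_blk (blkE S u) // wS.
by move: (in_blk u u_arr); rewrite same_blk (blkE S w) // uS.
Qed.

(* Every active set holds [sur S] free requests, each waiting one more unit of
   time per unit of time, while [y_S] grows at rate [r] if that number is
   nonzero. *)
Lemma grow_cost :
  waiting_cost (GState t' (Defs.gact st) (gM st) (grow r st t')) =
  dual_charge (GState t' (Defs.gact st) (gM st) (grow r st t')).
Proof.
rewrite /waiting_cost /dual_charge /=.
set free_count := \sum_(S in Defs.gact st) #|Defs.free st S|%:R * (t' - gtime st).
have waitingE : \sum_(v | arrived st v && ~~ matched st v) (t' - atime v) =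
    \sum_(v | arrived st v && ~~ matched st v) (gtime st - atime v) + free_count.
  rewrite /free_count -sum_free_requests ?(inv_trivIset st_inv) // -big_split /=.
  by apply: eq_bigr => v _; ring.
have dualE : \sum_S (sur k S)%:R * grow r st t' S =
    \sum_S (sur k S)%:R * gy st S + r * free_count.
  rewrite /free_count [X in _ + r * X]big_mkcond mulr_sumr -big_split /=.
  apply: eq_bigr => S _.
  rewrite growE mulrDr; congr (_ + _).
  case SP: (S \in Defs.gact st) => /=; last by rewrite !mulr0.
  rewrite -(inv_card_free st_inv SP).
  by case: ifP => [_|/negbFE/eqP ->]; [ring | rewrite cards0 !mul0r mulr0].
rewrite waitingE dualE mulrDr mulKf ?gt_eqF ?r_gt0 // addrA.
by congr (_ + _); apply: (inv_cost st_inv).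
Qed.

Lemma gd_inv_wait : gd_inv (GState t' (Defs.gact st) (gM st) (grow r st t')).
Proof.
case: st_inv => triv m_arr card_free _ _ _ _ _ _.
split; [exact: triv | exact: m_arr | exact: card_free | exact: grow_ge0
        | exact: grow_unarrived | exact: grow_load | exact: le_arrival
        | exact: grow_feasible | exact: grow_cost].
Qed.

End WaitStep.

Section MergeStep.
Variables (st : gstate R m) (u w : 'I_m) (gs : seq {set 'I_m}).
Hypothesis st_inv : gd_inv st.
Hypothesis cross : cross_pair st u w.
Hypothesis gs_free : all (fun g : {set 'I_m} =>
  (g \subset Defs.free st (blk st u :|: blk st w)) && (#|g| == k)) gs.
Hypothesis gs_disj : pairwise (fun g h : {set 'I_m} => [disjoint g & h]) gs.
Hypothesis few_left :
  (#|Defs.free st (blk st u :|: blk st w) :\: \bigcup_(g <- gs) g| < k)%N.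

Local Notation Au := (blk st u).
Local Notation Aw := (blk st w).
Local Notation U := (\bigcup_(g <- gs) g).
Local Notation st' := (GState (gtime st)
  ((Defs.gact st :\ Au :\ Aw) :|: [set Au :|: Aw])
  (gM st ++ [seq (g, gtime st) | g <- gs]) (gy st)).

Lemma blk_u_active : Au \in Defs.gact st.
Proof. by apply: pblock_mem; case/and3P: cross. Qed.

Lemma blk_w_active : Aw \in Defs.gact st.
Proof. by apply: pblock_mem; case/and3P: cross. Qed.

Lemma blks_disjoint : [disjoint Au & Aw].
Proof.
apply: (finset.trivIsetP (inv_trivIset st_inv)) blk_u_active blk_w_active _.
by case/and3P: cross.
Qed.

Lemma merged_group_free : U \subset Defs.free st (Au :|: Aw).
Proof.
apply/fintype.subsetP => x; rewrite finset.bigcup_seq => /finset.bigcupP[g g_in xg].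
by move/allP: gs_free => /(_ g g_in) /andP[/fintype.subsetP g_sub _]; apply: g_sub.
Qed.

Lemma merged_arrivedE x : arrived st' x = arrived st x.
Proof.
apply/coverP/coverP => [[C] | [C CP xC]].
  rewrite !finset.inE => /orP[/andP[_ /andP[_ CP]] xC | /eqP -> ]; first by exists C.
  by rewrite finset.inE => /orP[xA|xA]; [exists Au|exists Aw]; rewrite ?blk_u_active ?blk_w_active.
have [eCu|CAu] := eqVneq C Au.
  by subst C; exists (Au :|: Aw); rewrite !finset.inE ?eqxx ?xC ?orbT.
have [eCw|CAw] := eqVneq C Aw.
  by subst C; exists (Au :|: Aw); rewrite !finset.inE ?eqxx ?xC ?orbT.
by exists C; rewrite // !finset.inE CAu CAw CP.
Qed.

Lemma has_map_pair (t : R) x :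
  has (fun g : {set 'I_m} * R => x \in g.1) [seq (g, t) | g <- gs] = (x \in U).
Proof.
elim: gs => [|g gs' IH] /=; first by rewrite big_nil finset.inE.
by rewrite big_cons finset.inE IH.
Qed.

Lemma merged_matchedE x : matched st' x = matched st x || (x \in U).
Proof. by rewrite /matched /= has_cat has_map_pair. Qed.

Lemma merged_trivIset : finset.trivIset ((Defs.gact st :\ Au :\ Aw) :|: [set Au :|: Aw]).
Proof.
have triv := finset.trivIsetP (inv_trivIset st_inv).
have disjU C : C \in Defs.gact st -> C != Au -> C != Aw -> [disjoint Au :|: Aw & C].
  move=> CP CAu CAw; rewrite -setI_eq0 finset.setIUl finset.setU_eq0 !setI_eq0.
  by rewrite !triv ?blk_u_active ?blk_w_active // eq_sym.
apply/finset.trivIsetP => C D; rewrite !finset.inE.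
move=> /orP[/and3P[CAw CAu CP]|/eqP->] /orP[/and3P[DAw DAu DP]|/eqP->] CD.
- exact: triv.
- by rewrite disjoint_sym disjU.
- exact: disjU.
- by rewrite eqxx in CD.
Qed.

Lemma free_merged_other S : S \in Defs.gact st -> S != Au -> S != Aw ->
  Defs.free st' S = Defs.free st S.
Proof.
move=> SP SAu SAw; apply/setP => x; rewrite /Defs.free !finset.inE merged_matchedE.
have [xS|] //= := boolP (x \in S); have [xU|] := boolP (x \in U); rewrite ?orbF //.
have := fintype.subsetP (free_sub _ _) x (fintype.subsetP merged_group_free x xU).
have triv := finset.trivIsetP (inv_trivIset st_inv).
rewrite finset.inE => /orP[xA|xA].
  by rewrite (disjointFr (triv _ _ SP blk_u_active SAu) xS) in xA.
by rewrite (disjointFr (triv _ _ SP blk_w_active SAw) xS) in xA.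
Qed.

Lemma free_merged : Defs.free st' (Au :|: Aw) = Defs.free st (Au :|: Aw) :\: U.
Proof.
apply/setP => x; rewrite /Defs.free !finset.inE merged_matchedE negb_or.
by case: (x \in U); rewrite ?andbF ?andbT.
Qed.

(* Matching groups of size [k] does not change the number of free requests
   modulo [k], and fewer than [k] of them remain. *)
Lemma card_free_merged : #|Defs.free st' (Au :|: Aw)| = sur k (Au :|: Aw).
Proof.
have card_free := inv_card_free st_inv.
have disj := blks_disjoint.
have cardU : #|U| = (k * size gs)%N.
  by apply: card_bigcup_seq => //; apply/allP => g /(allP gs_free) /andP[_ ->].
have free_before : #|Defs.free st (Au :|: Aw)| = (sur k Au + sur k Aw)%N.
  have -> : Defs.free st (Au :|: Aw) = Defs.free st Au :|: Defs.free st Aw.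
    by apply/setP => x; rewrite /Defs.free !finset.inE andb_orl.
  rewrite cardsU card_free ?blk_u_active // card_free ?blk_w_active //.
  suff /eqP -> : Defs.free st Au :&: Defs.free st Aw == finset.set0 by rewrite cards0 subn0.
  by rewrite setI_eq0 (disjointWl (free_sub _ _) (disjointWr (free_sub _ _) disj)).
have split_free : (#|Defs.free st' (Au :|: Aw)| + k * size gs)%N = (sur k Au + sur k Aw)%N.
  by rewrite free_merged cardsDS ?merged_group_free // -free_before -cardU subnK
    ?subset_leq_card ?merged_group_free.
rewrite /sur cardsU; move: disj; rewrite -setI_eq0 => /eqP ->.
rewrite cards0 subn0 -modnDm -/(sur k Au) -/(sur k Aw) -split_free addnC mulnC.
by rewrite modnMDl modn_small // free_merged.
Qed.

Lemma merged_group_arrived x : x \in U -> arrived st x.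
Proof.
move=> /(fintype.subsetP merged_group_free) /(fintype.subsetP (free_sub _ _)).
rewrite /arrived finset.inE => /orP[] x_blk; apply/coverP;
  by [exists Au; rewrite ?blk_u_active | exists Aw; rewrite ?blk_w_active].
Qed.

Lemma merged_cost : waiting_cost st' = dual_charge st'.
Proof.
rewrite -[dual_charge st']/(dual_charge st) -(inv_cost st_inv) /waiting_cost /=.
rewrite big_cat /= big_map (big_bigcup_seq _ (fun v => gtime st - atime v) gs_disj).
rewrite [X in _ = _ + X](bigID (mem U)) /= -addrA; congr (_ + _); congr (_ + _).
  apply: eq_bigl => x; have [xU|] := boolP (x \in U); rewrite ?andbF //= andbT.
  have := fintype.subsetP merged_group_free x xU; rewrite /Defs.free finset.inE.
  by case/andP => _ ->; rewrite merged_group_arrived.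
by apply: eq_bigl => x; rewrite merged_arrivedE merged_matchedE negb_or andbA.
Qed.

Lemma gd_inv_merge : gd_inv st'.
Proof.
case: st_inv => _ m_arr card_free y_ge0 y_unarr load time_le feas _.
split => //.
- exact: merged_trivIset.
- move=> x; rewrite merged_matchedE merged_arrivedE => /orP[/m_arr //|xU].
  exact: merged_group_arrived.
- move=> S; rewrite !finset.inE => /orP[/and3P[SAw SAu SP]|/eqP->].
    by rewrite free_merged_other ?card_free.
  exact: card_free_merged.
- by move=> x; rewrite merged_arrivedE; apply: y_unarr.
- by move=> x; rewrite merged_arrivedE; apply: load.
- by move=> x; rewrite merged_arrivedE; apply: time_le.
- exact: merged_cost.
Qed.

End MergeStep.

Lemma gd_inv_reachable st : reachable st -> gd_inv st.
Proof.
elim=> [|s s' _ IH step]; first exact: gd_inv_init.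
case: s s' / step IH => [s v ? ? | s u w gs ? ? ? ? ? | s t' ? ? ? ? ?] IH.
- exact: gd_inv_arrive.
- exact: gd_inv_merge.
- exact: gd_inv_wait.
Qed.

End GDk.

(* [sur S <= sur S * (k - sur S)] because [sur S < k]. *)
Lemma sur_weighted_le_Dprime (R : realType) (X : Type) (k m gamma : nat)
    (dH : ('I_k -> X) -> R) (atime : 'I_m -> R) (pos : 'I_m -> X)
    (y : {set 'I_m} -> R) :
  (0 < k)%N -> Dfeasible gamma dH atime pos y ->
  ((\sum_S (sur k S)%:R * y S)%:E <= Dprime gamma dH atime pos)%E.
Proof.
move=> k_gt0 feas; apply: (@le_trans _ _ (Dobj k y)%:E); last first.
  by apply: ereal_sup_ubound; exists y.
rewrite lee_fin /Dobj; apply: ler_sum => S _; apply: ler_wpM2r; first by case: feas.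
by rewrite ler_nat -{1}(muln1 (sur k S)) leq_mul2l subn_gt0 ltn_pmod // orbT.
Qed.

Theorem lemma5 (R : realType) (X : Type) (k m gamma : nat)
  (dH : ('I_k -> X) -> R) (atime : 'I_m -> R) (pos : 'I_m -> X) (r : R)
  (st : gstate R m) :
  (2 <= k)%N -> (1 <= gamma <= k.-1)%N -> @is_Hmetric R X k gamma dH ->
  (k %| m)%N ->
  (forall v, 0 <= atime v) ->
  (forall u v : 'I_m, (u <= v)%N -> atime u <= atime v) ->
  r = (gamma%:R * k%:R ^+ 2)^-1 ->
  @gd_reach R X k m gamma r dH atime pos st ->
  (forall v, matched st v) ->
  (\sum_(g <- gM st) \sum_(v in g.1) (g.2 - atime v)
     = r^-1 * \sum_(S : {set 'I_m}) ((sur k S)%:R * gy st S)) /\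
  ((r^-1 * \sum_(S : {set 'I_m}) ((sur k S)%:R * gy st S))%:E
     <= (r^-1)%:E * @Dprime R X k m gamma dH atime pos)%E.
Proof.
move=> k_gt1 /andP[gamma_gt0 _] [_ [dH_ge0 _]] _ atime_ge0 _ r_def reach all_matched.
have st_inv := gd_inv_reachable k_gt1 gamma_gt0 r_def dH_ge0 atime_ge0 reach.
split.
  have := inv_cost st_inv; rewrite /waiting_cost /dual_charge => <-.
  by rewrite [X in _ = _ + X]big1 ?addr0 // => v /andP[_]; rewrite all_matched.
rewrite EFinM lee_wpmul2l ?lee_fin ?invr_ge0 ?(ltW (r_gt0 k_gt1 gamma_gt0 r_def)) //.
by apply: sur_weighted_le_Dprime; [exact: ltnW | case: st_inv].
Qed.
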